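(* Let $G$ be a simple connected graph with $n$ vertices and $m$ edges, let $k\ge1$ be an integer, and let $S_k(G)$ be the $k$-parallel subdivision graph of $G$. If $\sigma\neq 1$ is an eigenvalue of $\mathscr{L}(S_k(G))$, then $4\sigma-2\sigma^2$ is an eigenvalue of $\mathscr{L}(G)$, and its multiplicity is the same as that of $\sigma$.
   Context: For a graph $H$ with adjacency matrix $A(H)$ and diagonal degree matrix $D(H)$ (no isolated vertices), the normalized Laplacian is $\mathscr{L}(H)=I-D(H)^{-1/2}A(H)D(H)^{-1/2}$. The $k$-parallel subdivision graph $S_k(G)$ is obtained from $G$ by replacing each edge $uv$ of $G$ by $k$ internally disjoint paths $u-w-v$ of length $2$ (each with its own new middle vertex $w$). *)

From HB Require Import structures.
From mathcomp Require Import all_boot all_order all_algebra.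
Set Implicit Arguments. Unset Strict Implicit. Unset Printing Implicit Defensive.
Import Order.TTheory GRing.Theory Num.Theory.
Local Open Scope ring_scope.

Definition simple_graph (T : finType) (g : rel T) : Prop :=
  symmetric g /\ irreflexive g.

Definition connected_graph (T : finType) (g : rel T) : Prop :=
  forall x y : T, connect g x y.

Definition is_edge (T : finType) (g : rel T) (E : {set T}) : bool :=
  [exists x : T, exists y : T, g x y && (E == [set x; y])].

Definition edge_t (T : finType) (g : rel T) := {E : {set T} | is_edge g E}.

(* k-parallel subdivision: vertices of G plus one new vertex w_(uv,i)
   for every edge uv and every i < k, adjacent exactly to u and v. *)
Definition subdiv_vertex (T : finType) (g : rel T) (k : nat) : finType :=
  (T + (edge_t g * 'I_k))%type.

Definition subdiv_rel (T : finType) (g : rel T) (k : nat)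
  : rel (subdiv_vertex g k) :=
  fun u v => match u, v with
  | inl x, inr (E, _) => x \in val E
  | inr (E, _), inl x => x \in val E
  | _, _ => false
  end.

Definition adj_mx (R : nzRingType) (T : finType) (g : rel T) : 'M[R]_#|T| :=
  \matrix_(i, j) (g (enum_val i) (enum_val j))%:R.

Definition degree (T : finType) (g : rel T) (x : T) : nat := #|[set y | g x y]|.

Definition deg_invsqrt_mx (R : rcfType) (T : finType) (g : rel T) : 'M[R]_#|T| :=
  diag_mx (\row_i (Num.sqrt (degree g (enum_val i))%:R)^-1).

Definition norm_laplacian (R : rcfType) (T : finType) (g : rel T) : 'M[R]_#|T| :=
  1%:M - deg_invsqrt_mx R g *m adj_mx R g *m deg_invsqrt_mx R g.

Definition eig_mult (R : fieldType) (n : nat) (A : 'M[R]_n) (a : R) : nat :=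
  mup a (char_poly A).

Arguments subdiv_rel {T} g k.
Arguments subdiv_vertex {T} g k.
Arguments adj_mx R {T} g.
Arguments deg_invsqrt_mx R {T} g.
Arguments norm_laplacian R {T} g.
Arguments eig_mult {R n} A a.

From HB Require Import structures.
From mathcomp Require Import all_boot all_order all_algebra all_fingroup.
From mathcomp Require Import ring lra.
Import Order.TTheory GRing.Theory Num.Theory.
Local Open Scope ring_scope.

(* Listing the old vertices before the new ones, L(S_k(G)) = [[I, N], [N^T, I]]:
   new vertices have degree 2 and only old neighbours, an old vertex x has
   k deg(x) new neighbours, and two distinct old vertices share k of them when
   they are adjacent in G and none otherwise, whence N N^T = I - L(G)/2.
   Eliminating the lower-left block gives, with n = |V(G)| and m = |E(G)|,
     2^n (t-1)^n chi_S(t) = (-1)^n (t-1)^(km) chi_G(4t - 2t^2),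
   and as 4t - 2t^2 has nonzero derivative at every t <> 1, a root sigma <> 1
   of chi_S has the multiplicity of 4 sigma - 2 sigma^2 as a root of chi_G.
   A connected graph with an isolated vertex has no edge, and then
   L(S_k(G)) = I has no eigenvalue other than 1. *)

Lemma char_poly_reindex {R : comNzRingType} {m n} (A : 'M[R]_n) (h : 'I_m -> 'I_n) :
  bijective h -> char_poly (\matrix_(i, j) A (h i) (h j)) = char_poly A.
Proof.
move=> h_bij; have emn : m = n.
  by rewrite -[m]card_ord -[n]card_ord; apply: bij_eq_card h_bij.
subst m; have h_inj := bij_inj h_bij; set s := perm h_inj; rewrite /char_poly.
have -> : char_poly_mx (\matrix_(i, j) A (h i) (h j))
          = row_perm s (col_perm s (char_poly_mx A)).
  by apply/matrixP => i j; rewrite !mxE !permE (inj_eq h_inj).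
rewrite row_permE col_permE !det_mulmx !det_perm odd_permV.
by rewrite mulrCA -signr_addb addbb mulr1.
Qed.

Lemma char_poly_block1 (R : comNzRingType) m n (U : 'M[R]_(m, n)) (V : 'M[R]_(n, m)) :
  char_poly (block_mx 1%:M U V 1%:M) * ('X - 1) ^+ m
  = \det ((('X - 1) ^+ 2)%:M - map_mx polyC (U *m V)) * ('X - 1) ^+ n.
Proof.
set Y : {poly R} := 'X - 1.
have char_block : char_poly_mx (block_mx 1%:M U V 1%:M)
    = block_mx Y%:M (- map_mx polyC U) (- map_mx polyC V) Y%:M.
  rewrite /char_poly_mx map_block_mx scalar_mx_block opp_block_mx add_block_mx.
  by rewrite !sub0r !map_mx1 /Y !raddfB.
pose Q := block_mx Y%:M 0 (map_mx polyC V) (1%:M : 'M_n).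
have det_Q : \det Q = Y ^+ m by rewrite det_lblock det_scalar det1 mulr1.
rewrite /char_poly -det_Q -det_mulmx char_block mulmx_block.
rewrite -scalar_mxM -expr2 !mulmx0 !mulmx1 !add0r !mulNmx.
by rewrite mul_mx_scalar mul_scalar_mx addNr map_mxM det_ublock det_scalar.
Qed.

Lemma det_polyC_sub_scalar (R : comNzRingType) n (A : 'M[R]_n) (f : {poly R}) :
  \det (map_mx polyC A - f%:M) = (-1) ^+ n * (char_poly A \Po f).
Proof.
have -> : map_mx polyC A - f%:M = - map_mx (comp_poly f) (char_poly_mx A).
  apply/matrixP => i j; rewrite !mxE rmorphB /= rmorphMn /= comp_polyX comp_polyC.
  by case: (i == j) => /=; ring.
by rewrite -scaleN1r detZ det_map_mx.
Qed.

Lemma det_sqr_XsubC1_sub_half (F : fieldType) n (A : 'M[F]_n) : 2 != 0 :> F ->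
  2 ^+ n * \det ((('X - 1) ^+ 2)%:M - map_mx polyC (1%:M - 2^-1 *: A))
  = (-1) ^+ n * (char_poly A \Po ('X *+ 4 - 'X ^+ 2 *+ 2)).
Proof.
move=> two_neq0; rewrite -detZ -det_polyC_sub_scalar; congr (\det _).
apply/matrixP => i j; rewrite !mxE.
have half : (2 : {poly F}) * (2^-1)%:P = 1 by rewrite -polyC_natr -polyCM divff.
have a_half : (A i j)%:P = 2 * (2^-1)%:P * (A i j)%:P by rewrite half mul1r.
case: (i == j) => /=; rewrite ?mulr1n ?mulr0n ?polyCB ?polyCM ?polyC1 ?polyC0.
all: by rewrite [(A i j)%:P in RHS]a_half; ring.
Qed.

Lemma mup_comp_poly (R : fieldType) (c p : {poly R}) (s : R) :
  c != 0 -> ~~ root (p^`()) s -> mup s (c \Po p) = mup p.[s] c.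
Proof.
move=> c_neq0 p'_s.
have [m [q q_a ->]] := multiplicity_XsubC c p.[s].
move: q_a; rewrite c_neq0 /= => q_a.
have /factor_theorem [r p_r] : root (p - p.[s]%:P) s by rewrite /root !hornerE subrr.
have r_s : ~~ root r s.
  move: p'_s; rewrite -[p](subrK p.[s]%:P) p_r derivD derivC addr0 derivM derivXsubC.
  by rewrite /root !hornerE subrr mulr0 add0r.
rewrite mupMr // mup_XsubCX eqxx comp_polyM rmorphXn /=.
rewrite comp_polyB comp_polyX comp_polyC.
rewrite p_r exprMn mulrA mupMr ?mup_XsubCX ?eqxx //.
by rewrite rootM negb_or /root horner_comp q_a horner_exp expf_neq0.
Qed.

Lemma eigenvalue_eig_mult (F : fieldType) n (A : 'M[F]_n) a :
  eigenvalue A a = (0 < eig_mult A a)%N.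
Proof.
by rewrite eigenvalue_root_char -dvdp_XsubCl XsubC_dvd ?monic_neq0 ?char_poly_monic.
Qed.

Section SubdivisionCombinatorics.
Context {T : finType} {g : rel T} {k : nat}.
Hypotheses (g_sym : symmetric g) (g_irr : irreflexive g).
Local Notation W := ((edge_t g * 'I_k)%type : finType).
Local Notation S := (subdiv_rel g k).

Lemma edge_endpoints (E : edge_t g) :
  exists x y, [/\ g x y, x != y & val E = [set x; y]].
Proof.
case: E => E /= /existsP [x /existsP [y /andP [gxy /eqP ->]]].
by exists x, y; split=> //; apply: contraTneq gxy => ->; rewrite g_irr.
Qed.

Lemma is_edge_pair {x y} : g x y -> is_edge g [set x; y].
Proof.
by move=> gxy; apply/existsP; exists x; apply/existsP; exists y; rewrite gxy eqxx.
Qed.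

Definition edge_of {x y} (gxy : g x y) : edge_t g :=
  exist _ [set x; y] (is_edge_pair gxy).

Lemma edge_eq_pair {E : edge_t g} {x y} : x \in val E -> y \in val E -> x != y ->
  g x y && (val E == [set x; y]).
Proof.
have [a [b [gab _ ->]]] := edge_endpoints E.
rewrite !inE => /orP [] /eqP -> /orP [] /eqP -> //; rewrite ?eqxx //= => _.
  by rewrite gab.
by rewrite g_sym gab setUC eqxx.
Qed.

Lemma degree_subdiv_inr (w : W) : degree S (inr w) = 2%N.
Proof.
case: w => E i; rewrite /degree.
have -> : [set v | S (inr (E, i)) v] = inl @: val E.
  apply/setP => -[x|w]; rewrite inE /=; first by rewrite mem_imset //; move=> ? ? [].
  by apply/esym/imsetP => -[].
have [x [y [_ x_neq_y ->]]] := edge_endpoints E.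
by rewrite card_imset ?cards2 ?x_neq_y //; move=> ? ? [].
Qed.

Lemma card_edges_at x : #|[set E : edge_t g | x \in val E]| = degree g x.
Proof.
have pair_inj : injective (fun y => [set x; y]).
  move=> y z /setP eq_xy; move: (eq_xy y) (eq_xy z); rewrite !inE !eqxx !orbT /=.
  by move=> /esym /orP [/eqP -> | /eqP //] /orP [/eqP -> | /eqP ->].
have val_edges :
    val @: [set E : edge_t g | x \in val E] = (fun y => [set x; y]) @: [set y | g x y].
  apply/setP => P; apply/imsetP/imsetP => [[E] | [y]]; rewrite inE.
  - move=> xE ->; have [a [b [gab _ E_ab]]] := edge_endpoints E.
    move: xE; rewrite E_ab !inE => /orP [] /eqP ->; first by exists b; rewrite ?inE.
    by exists a; rewrite ?inE 1?setUC // g_sym.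
  - by move=> gxy ->; exists (edge_of gxy); rewrite ?inE /= ?eqxx.
by rewrite -(card_imset _ val_inj) val_edges card_imset.
Qed.

Lemma card_common_subdiv_nbrs x y :
  #|[set w : W | S (inl x) (inr w) && S (inl y) (inr w)]|
  = (k * (if x == y then degree g x else g x y))%N.
Proof.
have -> : [set w : W | S (inl x) (inr w) && S (inl y) (inr w)]
          = setX [set E : edge_t g | (x \in val E) && (y \in val E)] [set: 'I_k].
  by apply/setP => -[E i]; rewrite !inE andbT.
rewrite cardsX cardsT card_ord mulnC; congr (_ * _)%N.
have [<- | x_neq_y] := eqVneq x y.
  by rewrite -card_edges_at; apply: eq_card => E; rewrite !inE andbb.
case gxy: (g x y) => /=.
  rewrite -(cards1 (edge_of gxy)).
  apply: eq_card => E; rewrite !inE -val_eqE /=; apply/andP/eqP => [[xE yE] | ->].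
    by case/andP: (edge_eq_pair xE yE x_neq_y) => _ /eqP.
  by rewrite !inE !eqxx orbT.
apply/eqP; rewrite cards_eq0; apply/eqP/setP => E; rewrite !inE.
by apply/andP => -[xE yE]; move: (edge_eq_pair xE yE x_neq_y); rewrite gxy.
Qed.

Lemma degree_subdiv_inl x : degree S (inl x) = (k * degree g x)%N.
Proof.
have := card_common_subdiv_nbrs x x; rewrite eqxx => <-.
rewrite /degree -(card_imset _ (@inr_inj T W)).
apply: eq_card => -[y|w]; rewrite !inE /= ?andbb.
  by apply/esym/imsetP => -[].
by rewrite mem_imset ?inE /=; [rewrite andbb | move=> ? ? []].
Qed.

End SubdivisionCombinatorics.

Definition inv_sqrt_degree (R : rcfType) {U : finType} (r : rel U) (u : U) : R :=
  (Num.sqrt (degree r u)%:R)^-1.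

Lemma norm_laplacianE (R : rcfType) (U : finType) (r : rel U) i j :
  norm_laplacian R r i j = (i == j)%:R - inv_sqrt_degree R r (enum_val i)
    * (r (enum_val i) (enum_val j))%:R * inv_sqrt_degree R r (enum_val j).
Proof. by rewrite /norm_laplacian /deg_invsqrt_mx mul_mx_diag mul_diag_mx !mxE. Qed.

Section SubdivisionLaplacian.
Context {R : rcfType} {T : finType} {g : rel T} {k : nat}.
Hypotheses (g_sym : symmetric g) (g_irr : irreflexive g) (k_gt0 : (0 < k)%N).
Hypothesis degree_gt0 : forall x, (0 < degree g x)%N.
Local Notation W := ((edge_t g * 'I_k)%type : finType).
Local Notation V := (subdiv_vertex g k).
Local Notation S := (subdiv_rel g k).
Local Notation isd := (inv_sqrt_degree R).

Definition subdiv_cross_mx : 'M[R]_(#|T|, #|W|) := \matrix_(a, b)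
  - (isd S (inl (enum_val a)) * (S (inl (enum_val a)) (inr (enum_val b)))%:R
     * isd S (inr (enum_val b))).

Lemma subdiv_cross_mx_gram :
  subdiv_cross_mx *m subdiv_cross_mx^T = 1%:M - 2^-1 *: norm_laplacian R g.
Proof.
apply/matrixP => a b; set x := enum_val a; set y := enum_val b.
have isd_inl z : isd S (inl z) = (Num.sqrt k%:R)^-1 * isd g z.
  by rewrite /inv_sqrt_degree degree_subdiv_inl // natrM sqrtrM ?ler0n // invfM.
have isd_inr w : isd S (inr w) ^+ 2 = 2^-1.
  by rewrite /inv_sqrt_degree degree_subdiv_inr // exprVn sqr_sqrtr ?ler0n.
have -> : (subdiv_cross_mx *m subdiv_cross_mx^T) a b = isd S (inl x) * isd S (inl y)
    * 2^-1 *+ #|[set w : W | S (inl x) (inr w) && S (inl y) (inr w)]|.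
  rewrite mxE (reindex enum_rank) /=; last exact/onW_bij/enum_rank_bij.
  rewrite -sumr_const [RHS]big_mkcond; apply: eq_bigr => w _.
  rewrite !mxE enum_rankK -/x -/y inE -(isd_inr w); case: w => E i /=.
  by case: (x \in _); case: (y \in _) => /=; ring.
rewrite card_common_subdiv_nbrs // -mulr_natr natrM 4!mxE norm_laplacianE -/x -/y.
rewrite (inj_eq enum_val_inj) !isd_inl /inv_sqrt_degree.
have sqrt_neq0 n : (0 < n)%N -> Num.sqrt (n%:R : R) != 0.
  by move=> n_gt0; rewrite sqrtr_eq0 -ltNge ltr0n.
set sk := Num.sqrt k%:R; have sk_neq0 : sk != 0 by exact: sqrt_neq0.
have -> : k%:R = sk ^+ 2 by rewrite sqr_sqrtr ?ler0n.
have [a_eq_b | a_neq_b] := eqVneq a b.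
  have -> : y = x by rewrite /y -a_eq_b.
  set ux := Num.sqrt (degree g x)%:R; have ux_neq0 : ux != 0 by exact: sqrt_neq0.
  have -> : (degree g x)%:R = ux ^+ 2 by rewrite sqr_sqrtr ?ler0n.
  by rewrite g_irr /=; field; rewrite sk_neq0 ux_neq0.
by rewrite /=; field; rewrite sk_neq0 !sqrt_neq0.
Qed.

Definition subdiv_ord (i : 'I_(#|T| + #|W|)) : 'I_#|V| :=
  enum_rank (match split i with
             | inl a => inl (enum_val a)
             | inr b => inr (enum_val b) end : V).

Lemma subdiv_ord_bij : bijective subdiv_ord.
Proof.
pose ord_of (v : V) : 'I_#|T| + 'I_#|W| :=
  match v with inl x => inl (enum_rank x) | inr w => inr (enum_rank w) end.
exists (fun j => unsplit (ord_of (enum_val j))) => [i | j]; rewrite /subdiv_ord.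
  by rewrite enum_rankK -[RHS]splitK; case: (split i) => c; rewrite /= enum_valK.
rewrite unsplitK -[RHS]enum_valK.
by case: (enum_val j) => [x | w] /=; rewrite enum_rankK.
Qed.

Lemma norm_laplacian_subdiv_block :
  \matrix_(i, j) norm_laplacian R S (subdiv_ord i) (subdiv_ord j)
  = block_mx 1%:M subdiv_cross_mx subdiv_cross_mx^T 1%:M.
Proof.
apply/matrixP => i j; rewrite -[i]splitK -[j]splitK.
case: (split i) => a; case: (split j) => b.
all: rewrite mxE norm_laplacianE /subdiv_ord !unsplitK /= !enum_rankK.
all: rewrite (inj_eq enum_rank_inj).
- rewrite block_mxEul mxE (inj_eq (@inl_inj _ _)) (inj_eq enum_val_inj).
  by rewrite mulr0 mul0r subr0.
- by rewrite block_mxEur mxE; case: (enum_val b) => E c /=; ring.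
- by rewrite block_mxEdl !mxE; case: (enum_val a) => E c /=; ring.
- rewrite block_mxEdr mxE (inj_eq (@inr_inj _ _)) (inj_eq enum_val_inj).
  by case: (enum_val a) => E c /=; rewrite mulr0 mul0r subr0.
Qed.

Lemma char_poly_subdiv :
  2 ^+ #|T| * ('X - 1) ^+ #|T| * char_poly (norm_laplacian R S)
  = (-1) ^+ #|T| * ('X - 1) ^+ #|W|
    * (char_poly (norm_laplacian R g) \Po ('X *+ 4 - 'X ^+ 2 *+ 2)).
Proof.
rewrite -(char_poly_reindex _ _ subdiv_ord_bij) norm_laplacian_subdiv_block.
rewrite -mulrA [_ * char_poly _]mulrC char_poly_block1 subdiv_cross_mx_gram.
by rewrite mulrA det_sqr_XsubC1_sub_half ?pnatr_eq0 // mulrAC.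
Qed.

Lemma mup_char_poly_subdiv s : s != 1 ->
  mup s (char_poly (norm_laplacian R S))
  = mup (4 * s - 2 * s ^+ 2) (char_poly (norm_laplacian R g)).
Proof.
move=> s_neq1; have s_sub1 : s - 1 != 0 by rewrite subr_eq0.
have nonroot_2 : ~~ root (2 ^+ #|T| * ('X - 1) ^+ #|T|) s.
  by rewrite /root !hornerE mulf_neq0 ?expf_neq0 // -mulr2n pnatr_eq0.
have nonroot_N1 : ~~ root ((-1) ^+ #|T| * ('X - 1) ^+ #|W|) s.
  by rewrite /root !hornerE mulf_neq0 ?expf_neq0 ?oppr_eq0 ?oner_eq0.
have := congr1 (mup s) char_poly_subdiv; rewrite !mupMr // => ->.
rewrite mup_comp_poly ?monic_neq0 ?char_poly_monic //.
  by congr mup; rewrite hornerD hornerN !hornerMn hornerX hornerXn; ring.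
rewrite /root derivB !derivMn derivX derivXn /= expr1.
rewrite hornerD hornerN !hornerMn hornerX hornerC.
apply: contra s_neq1 => /eqP s_root; apply/eqP; lra.
Qed.

End SubdivisionLaplacian.

Section IsolatedVertex.
Context {T : finType} {g : rel T} {x : T}.
Hypothesis x_isolated : degree g x = 0%N.

Lemma isolated_nadj y : ~~ g x y.
Proof.
apply/negP => gxy; move/eqP: x_isolated; rewrite cards_eq0 => /eqP/setP/(_ y).
by rewrite !inE gxy.
Qed.

Lemma connect_isolated {y} : connect g x y -> y = x.
Proof.
case/connectP => -[_ -> // | z p /= /andP [gxz _] _].
by move: (isolated_nadj z); rewrite gxz.
Qed.

End IsolatedVertex.

Lemma subdiv_rel_nil (T : finType) (g : rel T) (k : nat) :
  (forall x y, ~~ g x y) -> forall u v, subdiv_rel g k u v = false.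
Proof.
have no_edge (E : edge_t g) : (forall x y, ~~ g x y) -> False.
  case: E => E /existsP [x /existsP [y /andP [gxy _]]] g_nil.
  by move: (g_nil x y); rewrite gxy.
by move=> g_nil [x | [E i]] [y | [E' j]] //=; case: (no_edge _ g_nil).
Qed.

Lemma norm_laplacian_nil (R : rcfType) (U : finType) (r : rel U) :
  (forall u v, r u v = false) -> norm_laplacian R r = 1%:M.
Proof.
move=> r_nil; apply/matrixP => i j.
by rewrite norm_laplacianE r_nil mulr0 mul0r subr0 mxE.
Qed.

Lemma eigenvalue_scalar1 (F : fieldType) n (a : F) :
  eigenvalue (1%:M : 'M[F]_n) a -> a = 1.
Proof.
case/eigenvalueP => v; rewrite mulmx1 => v_eq v_neq0.
have : (1 - a) *: v = 0 by rewrite scalerBl scale1r -v_eq subrr.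
by move/eqP; rewrite scaler_eq0 (negbTE v_neq0) orbF subr_eq0 => /eqP.
Qed.

Theorem lemma3p1 (R : rcfType) (T : finType) (g : rel T) (k : nat)
  (sig : R) :
  simple_graph g -> connected_graph g -> (0 < k)%N ->
  eigenvalue (norm_laplacian R (subdiv_rel g k)) sig -> sig != 1 ->
  eigenvalue (norm_laplacian R g) (4 * sig - 2 * sig ^+ 2) /\
  eig_mult (norm_laplacian R g) (4 * sig - 2 * sig ^+ 2)
  = eig_mult (norm_laplacian R (subdiv_rel g k)) sig.
Proof.
move=> [g_sym g_irr] g_conn k_gt0 sig_eig sig_neq1.
case: (pickP (fun x => degree g x == 0%N)) => [x /eqP x_isolated | no_isolated].
  have g_nil y z : ~~ g y z.
    by rewrite (connect_isolated x_isolated (g_conn x y)) isolated_nadj.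
  move: sig_eig; rewrite norm_laplacian_nil; last exact: subdiv_rel_nil.
  by move/eigenvalue_scalar1/eqP; rewrite (negbTE sig_neq1).
have degree_gt0 x : (0 < degree g x)%N by rewrite lt0n no_isolated.
have mult := mup_char_poly_subdiv g_sym g_irr k_gt0 degree_gt0 sig sig_neq1.
by move: sig_eig; rewrite !eigenvalue_eig_mult /eig_mult mult.
Qed.
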